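(* Let $b\ge a>1$ and define, for $t\in\mathbb{R}$, $$F_1(t)=\sum_{j=2}^\infty\frac{\exp\big(i t\, j^2(\log j)^b\big)}{j(\log j)^a}.$$ Then $F_1$, $\operatorname{Re}F_1$ and $\operatorname{Im}F_1$ are continuous and bounded on $\mathbb{R}$ but differentiable at no point of $\mathbb{R}$. If $b>a>1$, none of them is Lipschitz continuous at any point of $\mathbb{R}$.
   Context: A function $g\colon\mathbb{R}\to\mathbb{C}$ is Lipschitz continuous at $t_0$ if there exist constants $L>0$, $\eta>0$ such that $|g(t)-g(t_0)|\le L|t-t_0|$ for all $t\in\,]t_0-\eta,t_0+\eta[$. *)

(* classical real analysis. Complex numbers are modelled as
   pairs (real part, imaginary part) : R * R with the usual modulus. *)
From Stdlib Require Import Reals ClassicalEpsilon.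
Open Scope R_scope.

(* The value of a convergent real series sum_{n>=0} u n (unspecified if divergent). *)
Definition series_sum (u : nat -> R) : R :=
  epsilon (inhabits 0) (fun l => infinite_sum u l).

(* j = n + 2 runs over j >= 2. *)
Definition jj (n : nat) : R := INR (n + 2).

(* Real and imaginary parts of exp(i t j^2 (log j)^b) / (j (log j)^a). *)
Definition re_term (a b t : R) (n : nat) : R :=
  cos (t * (jj n) ^ 2 * Rpower (ln (jj n)) b) / (jj n * Rpower (ln (jj n)) a).
Definition im_term (a b t : R) (n : nat) : R :=
  sin (t * (jj n) ^ 2 * Rpower (ln (jj n)) b) / (jj n * Rpower (ln (jj n)) a).

Definition ReF1 (a b : R) (t : R) : R := series_sum (re_term a b t).
Definition ImF1 (a b : R) (t : R) : R := series_sum (im_term a b t).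
Definition F1 (a b : R) (t : R) : R * R := (ReF1 a b t, ImF1 a b t).

Definition Cmod (z : R * R) : R := sqrt (fst z ^ 2 + snd z ^ 2).
Definition Csub (z w : R * R) : R * R := (fst z - fst w, snd z - snd w).

Definition continuous_C (g : R -> R * R) (t0 : R) : Prop :=
  forall eps, 0 < eps -> exists delta, 0 < delta /\
    forall t, Rabs (t - t0) < delta -> Cmod (Csub (g t) (g t0)) < eps.

Definition differentiable_C (g : R -> R * R) (t0 : R) : Prop :=
  exists l : R * R, forall eps, 0 < eps -> exists delta, 0 < delta /\
    forall h, h <> 0 -> Rabs h < delta ->
      Cmod (Csub (fst (Csub (g (t0 + h)) (g t0)) / h,
                  snd (Csub (g (t0 + h)) (g t0)) / h) l) < eps.

Definition bounded_C (g : R -> R * R) : Prop :=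
  exists M, forall t, Cmod (g t) <= M.

Definition bounded_R (g : R -> R) : Prop :=
  exists M, forall t, Rabs (g t) <= M.

Definition lipschitz_at_C (g : R -> R * R) (t0 : R) : Prop :=
  exists L eta, 0 < L /\ 0 < eta /\
    forall t, t0 - eta < t < t0 + eta ->
      Cmod (Csub (g t) (g t0)) <= L * Rabs (t - t0).

Definition lipschitz_at_R (g : R -> R) (t0 : R) : Prop :=
  exists L eta, 0 < L /\ 0 < eta /\
    forall t, t0 - eta < t < t0 + eta ->
      Rabs (g t - g t0) <= L * Rabs (t - t0).

From Stdlib Require Import Reals Lra Lia Psatz ClassicalEpsilon.
Open Scope R_scope.

(* Both parts of F1 are cosine series g t = sum_k c_k cos (lam_k t + ps) with
   c_k = 1/(j (log j)^a) and lam_k = j^2 (log j)^b, j = k + 2.  Suppose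
   |g (t0 + h) - g t0 - l h| <= eps h for 0 < h <= 2L.  Test g (t0 + .) against the
   discrete Fejer-type functional
     T f = sum_{m1, m2 <= p} f ((m1 + m2) dl) cos (lam_j (m1 + m2) dl + ph),
   where (p + 1) dl = L and lam_j L is a multiple of 2 pi.  T annihilates affine
   functions, extracts (p + 1)^2 c_j / 2 from the j-th term, and damps the k-th term
   by a factor (dl (lam_k - lam_j))^-2; the residual contributes at most
   (p + 1)^2 2 eps L.  Hence
     c_j <= 4 eps L + 12 L^-2 sum_{k <> j} c_k / (lam_k - lam_j)^2,
   and with L = 64 pi / (j (log j)^b) the spacing of the frequencies makes the sum a
   fraction of c_j, leaving (log j)^(b - a) <= 512 pi eps for every large j.  For
   b = a this is impossible with eps small (no derivative), for b > a it is impossible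
   with eps fixed (no Lipschitz bound). *)

(** * Dirichlet and Fejér sums *)

Lemma sin_ge_linear y : 0 <= y <= 1 -> 5/6 * y <= sin y.
Proof.
  intros [y_ge0 y_le1].
  destruct (SIN y y_ge0) as [lb _]; [pose proof PI2_1; lra|].
  unfold sin_lb, sin_approx, sin_term in lb; simpl in lb.
  assert (taylor : y - y^3/6 + y^5/120 - y^7/5040 <= sin y)
    by (eapply Rle_trans; [|exact lb]; right; field).
  assert (0 <= y^2 <= 1) by (split; nra).
  assert (0 <= y^5) by (apply pow_le; lra).
  assert (y^7 <= y^5) by (replace (y^7) with (y^5 * y^2) by ring; nra).
  assert (y^3 <= y) by (replace (y^3) with (y * y^2) by ring; nra).
  lra.
Qed.

Lemma sin_sqr_ge y : Rabs y <= 1 -> 25/36 * y^2 <= sin y ^ 2.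
Proof.
  intros y_le1; destruct (Rle_dec 0 y) as [y_ge0 | y_lt0].
  - rewrite Rabs_right in y_le1 by lra.
    pose proof (sin_ge_linear y (conj y_ge0 y_le1)); nra.
  - rewrite Rabs_left in y_le1 by lra.
    pose proof (sin_ge_linear (- y) ltac:(lra)) as H; rewrite sin_neg in H; nra.
Qed.

Definition cos_sum (p : nat) (x al : R) : R :=
  sum_f_R0 (fun m => cos (INR m * x + al)) p.

Lemma cos_sum_telescope p x al :
  2 * sin (x/2) * cos_sum p x al = sin ((INR p + /2) * x + al) - sin (al - x/2).
Proof.
  assert (step : forall A, 2 * sin (x/2) * cos A = sin (A + x/2) - sin (A - x/2))
    by (intros A; rewrite sin_plus, sin_minus; ring).
  unfold cos_sum; induction p as [|p IH].
  - simpl; rewrite step.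
    replace (0 * x + al + x / 2) with ((0 + / 2) * x + al) by field.
    replace (0 * x + al - x / 2) with (al - x / 2) by field.
    reflexivity.
  - rewrite tech5, Rmult_plus_distr_l, IH, step, S_INR.
    replace ((INR p + 1) * x + al - x / 2) with ((INR p + / 2) * x + al) by field.
    replace ((INR p + 1) * x + al + x / 2) with ((INR p + 1 + / 2) * x + al) by field.
    ring.
Qed.

Lemma cos_sum_closed p x al :
  sin (x/2) * cos_sum p x al = cos (INR p * x / 2 + al) * sin ((INR p + 1) * x / 2).
Proof.
  pose proof (cos_sum_telescope p x al) as H; rewrite form4 in H.
  replace (((INR p + / 2) * x + al + (al - x / 2)) / 2) with (INR p * x / 2 + al) in H by field.
  replace (((INR p + / 2) * x + al - (al - x / 2)) / 2) with ((INR p + 1) * x / 2) in H by field.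
  lra.
Qed.

Lemma cos_sum_eq0 p x al :
  sin (x/2) <> 0 -> sin ((INR p + 1) * x / 2) = 0 -> cos_sum p x al = 0.
Proof.
  intros sin_neq0 sin_eq0; pose proof (cos_sum_closed p x al) as H.
  rewrite sin_eq0, Rmult_0_r in H.
  destruct (Rmult_integral _ _ H); [contradiction | assumption].
Qed.

Lemma Rabs_cos_le1 x : Rabs (cos x) <= 1.
Proof. apply Rabs_le, COS_bound. Qed.

Lemma Rabs_sin_le1 x : Rabs (sin x) <= 1.
Proof. apply Rabs_le, SIN_bound. Qed.

Lemma Rabs_mul_le1 x y : Rabs x <= 1 -> Rabs y <= 1 -> Rabs (x * y) <= 1.
Proof.
  intros; rewrite Rabs_mult; pose proof (Rabs_pos x); pose proof (Rabs_pos y); nra.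
Qed.

Lemma Rabs_sin_mul_cos_sum_le p x al : Rabs (sin (x/2) * cos_sum p x al) <= 1.
Proof. rewrite cos_sum_closed; apply Rabs_mul_le1; [apply Rabs_cos_le1 | apply Rabs_sin_le1]. Qed.

Definition dsum (p : nat) (F : nat -> nat -> R) : R :=
  sum_f_R0 (fun m1 => sum_f_R0 (fun m2 => F m1 m2) p) p.

Lemma dsum_ext p F G : (forall m1 m2, F m1 m2 = G m1 m2) -> dsum p F = dsum p G.
Proof. intros H; unfold dsum; apply sum_eq; intros; apply sum_eq; intros; apply H. Qed.

Lemma dsum_plus p F G : dsum p (fun m1 m2 => F m1 m2 + G m1 m2) = dsum p F + dsum p G.
Proof. unfold dsum; rewrite <- sum_plus; apply sum_eq; intros; apply sum_plus. Qed.

Lemma dsum_scal p F r : dsum p (fun m1 m2 => r * F m1 m2) = r * dsum p F.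
Proof.
  unfold dsum; rewrite scal_sum; apply sum_eq; intros.
  rewrite Rmult_comm, scal_sum; apply sum_eq; intros; ring.
Qed.

Lemma sum_f_R0_swap (F : nat -> nat -> R) m n :
  sum_f_R0 (fun i => sum_f_R0 (fun k => F i k) n) m =
  sum_f_R0 (fun k => sum_f_R0 (fun i => F i k) m) n.
Proof.
  induction m as [|m IH]; simpl; [reflexivity|].
  rewrite IH, <- sum_plus; reflexivity.
Qed.

Lemma dsum_swap p F : dsum p (fun m1 m2 => F m2 m1) = dsum p F.
Proof. unfold dsum; rewrite sum_f_R0_swap; reflexivity. Qed.

Lemma sum_f_R0_le_const (f : nat -> R) n B :
  (forall k, (k <= n)%nat -> f k <= B) -> sum_f_R0 f n <= (INR n + 1) * B.
Proof.
  intros H; eapply Rle_trans; [apply (sum_Rle _ (fun _ => B)); assumption|].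
  rewrite sum_cte, S_INR; lra.
Qed.

Lemma Rabs_dsum_le p F B :
  (forall m1 m2, (m1 <= p)%nat -> (m2 <= p)%nat -> Rabs (F m1 m2) <= B) ->
  Rabs (dsum p F) <= (INR p + 1)^2 * B.
Proof.
  intros H; unfold dsum; eapply Rle_trans; [apply Rsum_abs|].
  replace ((INR p + 1)^2 * B) with ((INR p + 1) * ((INR p + 1) * B)) by ring.
  apply sum_f_R0_le_const; intros m1 Hm1.
  eapply Rle_trans; [apply Rsum_abs|].
  apply sum_f_R0_le_const; auto.
Qed.

Lemma dsum_const p r : dsum p (fun _ _ => r) = (INR p + 1)^2 * r.
Proof.
  unfold dsum; rewrite (sum_eq _ (fun _ => r * INR (S p))) by (intros; apply sum_cte).
  rewrite sum_cte, S_INR; ring.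
Qed.

Definition fejer_sum (p : nat) (x al : R) : R :=
  dsum p (fun m1 m2 => cos ((INR m1 + INR m2) * x + al)).

Lemma fejer_sum_rows p x al :
  fejer_sum p x al = sum_f_R0 (fun m1 => cos_sum p x (INR m1 * x + al)) p.
Proof.
  unfold fejer_sum, dsum, cos_sum; apply sum_eq; intros; apply sum_eq; intros.
  f_equal; ring.
Qed.

Lemma fejer_sum_closed p x al :
  sin (x/2) * fejer_sum p x al =
  sin ((INR p + 1) * x / 2) * cos_sum p x (INR p * x / 2 + al).
Proof.
  rewrite fejer_sum_rows, scal_sum; unfold cos_sum at 2; rewrite scal_sum.
  apply sum_eq; intros i _; rewrite Rmult_comm, cos_sum_closed.
  replace (INR p * x / 2 + (INR i * x + al)) with (INR i * x + (INR p * x / 2 + al)) by ring.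
  ring.
Qed.

Lemma fejer_sum_eq0 p x al :
  sin (x/2) <> 0 -> sin ((INR p + 1) * x / 2) = 0 -> fejer_sum p x al = 0.
Proof.
  intros sin_neq0 sin_eq0; rewrite fejer_sum_rows.
  rewrite (sum_eq _ (fun _ => 0)) by (intros; apply cos_sum_eq0; assumption).
  rewrite sum_cte; ring.
Qed.

Lemma Rabs_fejer_sum_le p x al :
  sin (x/2) <> 0 -> Rabs (fejer_sum p x al) <= / sin (x/2) ^ 2.
Proof.
  intros sin_neq0.
  assert (s2_gt0 : 0 < sin (x/2) ^ 2)
    by (rewrite <- Rsqr_pow2; apply Rsqr_pos_lt; assumption).
  assert (bound : Rabs (sin (x/2) ^ 2 * fejer_sum p x al) <= 1).
  { replace (sin (x/2) ^ 2 * fejer_sum p x al)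
      with (sin ((INR p + 1) * x / 2) * (sin (x/2) * cos_sum p x (INR p * x / 2 + al)))
      by (rewrite <- Rmult_assoc, (Rmult_comm _ (sin (x/2))), Rmult_assoc, <- fejer_sum_closed;
          ring).
    apply Rabs_mul_le1; [apply Rabs_sin_le1 | apply Rabs_sin_mul_cos_sum_le]. }
  rewrite Rabs_mult, (Rabs_right (sin (x/2) ^ 2)) in bound by lra.
  apply (Rmult_le_reg_l (sin (x/2) ^ 2)); [assumption|].
  rewrite Rinv_r by lra; assumption.
Qed.

Lemma Rabs_fejer_sum_le_sqr p x al :
  0 < Rabs x <= 2 -> Rabs (fejer_sum p x al) <= 144 / (25 * x^2).
Proof.
  intros x_range.
  assert (half_le1 : Rabs (x/2) <= 1)
    by (unfold Rdiv; rewrite Rabs_mult, (Rabs_right (/2)); lra).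
  pose proof (sin_sqr_ge (x/2) half_le1) as sin_lb.
  assert (x2_gt0 : 0 < x^2)
    by (rewrite <- Rsqr_pow2; apply Rsqr_pos_lt; intros ->; rewrite Rabs_R0 in x_range; lra).
  assert (s2_gt0 : 0 < sin (x/2) ^ 2) by nra.
  eapply Rle_trans; [apply Rabs_fejer_sum_le; intros E; rewrite E in s2_gt0; lra|].
  apply (Rmult_le_reg_l (sin (x/2) ^ 2)); [assumption|].
  rewrite Rinv_r by lra.
  apply (Rmult_le_reg_l (25 * x^2)); [nra|].
  replace (25 * x ^ 2 * (sin (x / 2) ^ 2 * (144 / (25 * x ^ 2))))
    with (144 * sin (x/2) ^ 2) by (field; intros ->; lra).
  replace ((x/2)^2) with (x^2/4) in sin_lb by field.
  nra.
Qed.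

(** * The test functional *)

Definition test_sum (p : nat) (dl lj ph : R) (f : R -> R) : R :=
  dsum p (fun m1 m2 =>
    f ((INR m1 + INR m2) * dl) * cos (lj * ((INR m1 + INR m2) * dl) + ph)).

Section Test_sum.
Variables (p : nat) (dl lj ph : R).

Lemma test_sum_ext f g : (forall h, f h = g h) -> test_sum p dl lj ph f = test_sum p dl lj ph g.
Proof. intros H; apply dsum_ext; intros; rewrite H; reflexivity. Qed.

Lemma test_sum_plus f g :
  test_sum p dl lj ph (fun h => f h + g h) = test_sum p dl lj ph f + test_sum p dl lj ph g.
Proof. unfold test_sum; rewrite <- dsum_plus; apply dsum_ext; intros; ring. Qed.

Lemma test_sum_scal f r : test_sum p dl lj ph (fun h => r * f h) = r * test_sum p dl lj ph f.
Proof. unfold test_sum; rewrite <- dsum_scal; apply dsum_ext; intros; ring. Qed.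

Lemma test_sum_sum (F : nat -> R -> R) N :
  test_sum p dl lj ph (fun h => sum_f_R0 (fun k => F k h) N) =
  sum_f_R0 (fun k => test_sum p dl lj ph (F k)) N.
Proof.
  induction N as [|N IH]; [reflexivity|].
  rewrite tech5, <- IH, <- test_sum_plus; apply test_sum_ext; intros; apply tech5.
Qed.

Lemma Rabs_test_sum_le f B : 0 <= dl ->
  (forall h, 0 <= h <= 2 * INR p * dl -> Rabs (f h) <= B) ->
  Rabs (test_sum p dl lj ph f) <= (INR p + 1)^2 * B.
Proof.
  intros dl_ge0 f_le; apply Rabs_dsum_le; intros m1 m2 m1_le m2_le.
  rewrite Rabs_mult.
  assert (Rabs (f ((INR m1 + INR m2) * dl)) <= B).
  { apply f_le; apply le_INR in m1_le, m2_le.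
    pose proof (pos_INR m1); pose proof (pos_INR m2); split; nra. }
  pose proof (Rabs_cos_le1 (lj * ((INR m1 + INR m2) * dl) + ph)).
  pose proof (Rabs_pos (f ((INR m1 + INR m2) * dl))).
  pose proof (Rabs_pos (cos (lj * ((INR m1 + INR m2) * dl) + ph))).
  nra.
Qed.

Lemma test_sum_cos lk t0 ps :
  test_sum p dl lj ph (fun h => cos (lk * (t0 + h) + ps)) =
  (fejer_sum p ((lk - lj) * dl) (lk * t0 + ps - ph) +
   fejer_sum p ((lk + lj) * dl) (lk * t0 + ps + ph)) / 2.
Proof.
  unfold test_sum, fejer_sum, Rdiv.
  rewrite Rmult_comm, <- dsum_plus, <- dsum_scal; apply dsum_ext; intros m1 m2.
  set (s := INR m1 + INR m2).
  set (A := lk * (t0 + s * dl) + ps); set (B := lj * (s * dl) + ph).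
  replace (s * ((lk - lj) * dl) + (lk * t0 + ps - ph)) with (A - B) by (unfold A, B; ring).
  replace (s * ((lk + lj) * dl) + (lk * t0 + ps + ph)) with (A + B) by (unfold A, B; ring).
  rewrite cos_minus, cos_plus; field.
Qed.

Hypothesis sin_step_neq0 : sin (lj * dl / 2) <> 0.
Hypothesis sin_period_eq0 : sin ((INR p + 1) * (lj * dl) / 2) = 0.

Lemma test_sum_const C : test_sum p dl lj ph (fun _ => C) = 0.
Proof.
  transitivity (C * fejer_sum p (lj * dl) ph).
  - unfold test_sum, fejer_sum; rewrite <- dsum_scal; apply dsum_ext; intros.
    do 3 f_equal; ring.
  - rewrite fejer_sum_eq0 by assumption; ring.
Qed.

(* Both halves vanish because each row of the double sum is a complete cos_sum. *)
Lemma test_sum_id : test_sum p dl lj ph (fun h => h) = 0.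
Proof.
  set (x := lj * dl).
  set (F := fun m1 m2 => INR m1 * cos ((INR m1 + INR m2) * x + ph)).
  assert (F_eq0 : dsum p F = 0).
  { unfold dsum; rewrite (sum_eq _ (fun _ => 0)); [rewrite sum_cte; ring|].
    intros i _; transitivity (INR i * cos_sum p x (INR i * x + ph)).
    - unfold cos_sum; rewrite scal_sum; apply sum_eq; intros.
      unfold F; rewrite Rmult_comm; do 2 f_equal; ring.
    - rewrite cos_sum_eq0 by assumption; ring. }
  transitivity (dl * (dsum p F + dsum p (fun m1 m2 => F m2 m1))).
  - rewrite <- dsum_plus, <- dsum_scal; apply dsum_ext; intros; unfold F, x.
    replace ((INR m2 + INR m1) * (lj * dl) + ph) with (lj * ((INR m1 + INR m2) * dl) + ph)
      by ring.
    replace ((INR m1 + INR m2) * (lj * dl) + ph) with (lj * ((INR m1 + INR m2) * dl) + ph)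
      by ring.
    ring.
  - rewrite (dsum_swap p F), F_eq0; ring.
Qed.

End Test_sum.

Lemma sin_half_neq0 y : 0 < y <= 2 -> sin (y / 2) <> 0.
Proof. intros; apply Rgt_not_eq, sin_gt_0; pose proof PI2_1; lra. Qed.

Lemma sin_INR_mul_PI Q : sin (INR Q * PI) = 0.
Proof. apply sin_eq_0_1; exists (Z.of_nat Q); rewrite INR_IZR_INZ; reflexivity. Qed.

(* [lj * dl <= 1] keeps the step factor [sin (lj * dl / 2)] of the Fejér sums away from [0];
   [resonance] makes the window [(p + 1) * dl] a whole number of periods of [lj]. *)
Section Resonance.
Variables (p Q : nat) (dl lj : R).
Hypothesis step_small : 0 < lj * dl <= 1.
Hypothesis resonance : (INR p + 1) * (lj * dl) = 2 * PI * INR Q.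

Lemma test_sum_affine ph C l : test_sum p dl lj ph (fun h => C + l * h) = 0.
Proof.
  assert (sin_step : sin (lj * dl / 2) <> 0) by (apply sin_half_neq0; lra).
  assert (sin_period : sin ((INR p + 1) * (lj * dl) / 2) = 0).
  { replace ((INR p + 1) * (lj * dl) / 2) with (INR Q * PI) by lra.
    apply sin_INR_mul_PI. }
  rewrite test_sum_plus, test_sum_scal, test_sum_const, test_sum_id by assumption; ring.
Qed.

Lemma test_sum_cos_diag t0 ps :
  test_sum p dl lj (lj * t0 + ps) (fun h => cos (lj * (t0 + h) + ps)) = (INR p + 1)^2 / 2.
Proof.
  rewrite test_sum_cos.
  replace ((lj - lj) * dl) with 0 by ring; replace (lj * t0 + ps - (lj * t0 + ps)) with 0 by ring.
  rewrite (fejer_sum_eq0 p ((lj + lj) * dl)).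
  - unfold fejer_sum; rewrite (dsum_ext _ _ (fun _ _ => 1)), dsum_const; [field|].
    intros; rewrite Rmult_0_r, Rplus_0_r; apply cos_0.
  - apply sin_half_neq0; lra.
  - replace ((INR p + 1) * ((lj + lj) * dl) / 2) with (INR (2 * Q) * PI)
      by (rewrite mult_INR; simpl INR; lra).
    apply sin_INR_mul_PI.
Qed.

Lemma Rabs_test_sum_residual_le ph (g : R -> R) t0 l eps : 0 < dl -> 0 <= eps ->
  (forall h, 0 < h <= 2 * ((INR p + 1) * dl) -> Rabs (g (t0 + h) - g t0 - l * h) <= eps * h) ->
  Rabs (test_sum p dl lj ph (fun h => g (t0 + h))) <=
  (INR p + 1)^2 * (2 * eps * ((INR p + 1) * dl)).
Proof.
  intros dl_gt0 eps_ge0 residual; pose proof (pos_INR p).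
  rewrite (test_sum_ext _ _ _ _ _ (fun h => (g (t0 + h) - g t0 - l * h) + (g t0 + l * h)))
    by (intros; ring).
  rewrite test_sum_plus, test_sum_affine, Rplus_0_r.
  apply Rabs_test_sum_le; [lra|]; intros h h_range.
  destruct (Req_dec h 0) as [-> | h_neq0].
  - rewrite Rplus_0_r, Rmult_0_r, Rminus_0_r, Rminus_diag, Rabs_R0; nra.
  - eapply Rle_trans; [apply residual; nra | nra].
Qed.

End Resonance.

Lemma Rabs_test_sum_cos_le p dl lj ph lk t0 ps :
  0 < lk * dl <= 1 -> 0 < lj * dl <= 1 -> lk <> lj ->
  Rabs (test_sum p dl lj ph (fun h => cos (lk * (t0 + h) + ps))) <=
  6 / (dl^2 * (lk - lj)^2).
Proof.
  intros lk_small lj_small lk_neq; rewrite test_sum_cos.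
  set (x1 := (lk - lj) * dl); set (x2 := (lk + lj) * dl).
  assert (x1_ne0 : x1 <> 0)
    by (unfold x1; apply Rmult_integral_contrapositive; split; [lra | nra]).
  assert (x1_range : 0 < Rabs x1 <= 2)
    by (split; [apply Rabs_pos_lt; assumption | apply Rabs_le; unfold x1; nra]).
  assert (x2_range : 0 < Rabs x2 <= 2) by (rewrite Rabs_right; unfold x2; nra).
  pose proof (Rabs_fejer_sum_le_sqr p x1 (lk * t0 + ps - ph) x1_range) as D1.
  pose proof (Rabs_fejer_sum_le_sqr p x2 (lk * t0 + ps + ph) x2_range) as D2.
  assert (x1_sq : 0 < x1^2) by (rewrite <- Rsqr_pow2; apply Rsqr_pos_lt; assumption).
  assert (x12 : x1^2 <= x2^2).
  { replace (x2^2) with (x1^2 + 4 * (lk * dl) * (lj * dl)) by (unfold x1, x2; ring); nra. }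
  assert (144 / (25 * x2^2) <= 144 / (25 * x1^2))
    by (unfold Rdiv; apply Rmult_le_compat_l; [lra | apply Rinv_le_contravar; nra]).
  assert (144 / (25 * x1^2) <= 6 / x1^2)
    by (unfold Rdiv; rewrite Rinv_mult; pose proof (Rinv_0_lt_compat _ x1_sq); lra).
  replace (dl^2 * (lk - lj)^2) with (x1^2) by (unfold x1; ring).
  unfold Rdiv at 1; rewrite Rabs_mult, (Rabs_right (/2)) by lra.
  pose proof (Rabs_triang (fejer_sum p x1 (lk * t0 + ps - ph)) (fejer_sum p x2 (lk * t0 + ps + ph))).
  lra.
Qed.

(** * Cosine series with nonnegative coefficients *)

Lemma series_sum_spec u : (exists l, infinite_sum u l) -> infinite_sum u (series_sum u).
Proof. apply (epsilon_spec (inhabits 0) (fun l => infinite_sum u l)). Qed.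

Lemma infinite_sum_ext (u v : nat -> R) l :
  (forall k, u k = v k) -> infinite_sum u l -> infinite_sum v l.
Proof.
  intros uv u_sum eps eps_gt0; destruct (u_sum eps eps_gt0) as [N HN]; exists N.
  intros n n_ge; rewrite <- (sum_eq u v n) by auto; apply HN; assumption.
Qed.

Lemma infinite_sum_of_Rabs_le (u c : nat -> R) S :
  (forall k, Rabs (u k) <= c k) -> infinite_sum c S -> exists l, infinite_sum u l.
Proof.
  intros u_le c_sum.
  assert (abs_cv : {l | Un_cv (fun N => sum_f_R0 (fun k => Rabs (u k)) N) l}).
  { apply Rseries_CV_comp with c; [intros; split; [apply Rabs_pos | auto] | exists S; exact c_sum]. }
  apply CV_Cauchy, cauchy_abs, R_complete in abs_cv as [l Hl].
  exists l; exact Hl.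
Qed.

Lemma Rabs_mul_cos_le c x : 0 <= c -> Rabs (c * cos x) <= c.
Proof.
  intros c_ge0; rewrite Rabs_mult, Rabs_right by lra.
  pose proof (Rabs_cos_le1 x); pose proof (Rabs_pos (cos x)); nra.
Qed.

Lemma Rabs_le_between x y : Rabs x <= y -> - y <= x <= y.
Proof. unfold Rabs; destruct (Rcase_abs x); lra. Qed.

Definition punctured (j : nat) (f : nat -> R) (k : nat) : R :=
  if Nat.eq_dec k j then 0 else f k.

Lemma sum_f_R0_punctured (f : nat -> R) j N :
  (j <= N)%nat -> sum_f_R0 f N = f j + sum_f_R0 (punctured j f) N.
Proof.
  unfold punctured; intros j_le; induction N as [|N IH].
  - assert (j = 0%nat) as -> by lia; simpl; ring.
  - rewrite !tech5; destruct (Nat.eq_dec (S N) j) as [<- | SN_neq].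
    + rewrite (sum_eq (fun k => if Nat.eq_dec k (S N) then 0 else f k) f); [ring|].
      intros i i_le; destruct (Nat.eq_dec i (S N)); [lia | reflexivity].
    + rewrite IH by lia; ring.
Qed.

Lemma sum_f_R0_ge_term (f : nat -> R) N k :
  (forall i, 0 <= f i) -> (k <= N)%nat -> f k <= sum_f_R0 f N.
Proof.
  intros f_ge0 k_le; induction N as [|N IH].
  - assert (k = 0%nat) as -> by lia; simpl; lra.
  - rewrite tech5; destruct (Nat.eq_dec k (S N)) as [-> | k_neq].
    + pose proof (cond_pos_sum f N f_ge0); lra.
    + pose proof (f_ge0 (S N)); assert (f k <= sum_f_R0 f N) by (apply IH; lia); lra.
Qed.

Section Cosine_series.
Variables (c lam : nat -> R) (ps Sc : R) (g : R -> R).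
Hypothesis c_ge0 : forall k, 0 <= c k.
Hypothesis lam_gt0 : forall k, 0 < lam k.
Hypothesis c_sum : infinite_sum c Sc.
Hypothesis g_sum : forall t, infinite_sum (fun k => c k * cos (lam k * t + ps)) (g t).

Lemma cos_series_tail t N :
  Rabs (g t - sum_f_R0 (fun k => c k * cos (lam k * t + ps)) N) <= Sc - sum_f_R0 c N.
Proof.
  exact (sum_maj1 (fun k t => c k * cos (lam k * t + ps)) c t (g t) Sc N
           (g_sum t) c_sum (fun k => Rabs_mul_cos_le _ _ (c_ge0 k))).
Qed.

Lemma Rabs_test_sum_cos_series_sub_le p dl lj ph t0 N : 0 <= dl ->
  Rabs (test_sum p dl lj ph (fun h => g (t0 + h)) -
        sum_f_R0 (fun k => c k * test_sum p dl lj ph (fun h => cos (lam k * (t0 + h) + ps))) N)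
  <= (INR p + 1)^2 * (Sc - sum_f_R0 c N).
Proof.
  intros dl_ge0; set (partial := fun h => sum_f_R0 (fun k => c k * cos (lam k * (t0 + h) + ps)) N).
  rewrite (test_sum_ext _ _ _ _ _ (fun h => partial h + (g (t0 + h) - partial h)))
    by (intros; ring).
  rewrite test_sum_plus; unfold partial at 1; rewrite test_sum_sum.
  rewrite (sum_eq _ (fun k => c k * test_sum p dl lj ph (fun h => cos (lam k * (t0 + h) + ps))))
    by (intros; apply test_sum_scal).
  match goal with |- Rabs (?A + ?X - ?A) <= _ => replace (A + X - A) with X by ring end.
  apply Rabs_test_sum_le; [assumption | intros; apply cos_series_tail].
Qed.

Lemma Rabs_punctured_test_sum_le p dl t0 ph j N :
  (forall k, (k <= N)%nat -> 0 < lam k * dl <= 1) -> (j <= N)%nat ->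
  (forall k, k <> j -> lam k <> lam j) ->
  Rabs (sum_f_R0 (punctured j (fun k =>
          c k * test_sum p dl (lam j) ph (fun h => cos (lam k * (t0 + h) + ps)))) N) <=
  6 / dl^2 * sum_f_R0 (punctured j (fun k => c k / (lam k - lam j)^2)) N.
Proof.
  intros step_small j_le lam_inj.
  assert (dl_gt0 : 0 < dl) by (specialize (step_small j j_le); pose proof (lam_gt0 j); nra).
  eapply Rle_trans; [apply Rsum_abs|]; rewrite scal_sum; apply sum_Rle; intros k k_le.
  unfold punctured; destruct (Nat.eq_dec k j) as [_ | k_neq]; [rewrite Rabs_R0; lra|].
  assert (gap : lam k - lam j <> 0) by (pose proof (lam_inj k k_neq); lra).
  rewrite Rabs_mult, (Rabs_right (c k)) by (apply Rle_ge; auto).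
  replace (c k / (lam k - lam j) ^ 2 * (6 / dl ^ 2))
    with (c k * (6 / (dl ^ 2 * (lam k - lam j) ^ 2))) by (field; lra).
  apply Rmult_le_compat_l; [auto|].
  apply Rabs_test_sum_cos_le; auto.
Qed.

Lemma cos_series_test_estimate t0 l eps L B (j N p Q : nat) :
  0 < L -> (j <= N)%nat -> (forall k, (k <= N)%nat -> lam k * (L / (INR p + 1)) <= 1) ->
  lam j * L = 2 * PI * INR Q -> (forall k, k <> j -> lam k <> lam j) ->
  sum_f_R0 (punctured j (fun k => c k / (lam k - lam j)^2)) N <= B -> 0 <= eps ->
  (forall h, 0 < h <= 2 * L -> Rabs (g (t0 + h) - g t0 - l * h) <= eps * h) ->
  c j / 2 <= 2 * eps * L + 6 * B / L^2 + (Sc - sum_f_R0 c N).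
Proof.
  intros L_gt0 j_le lam_small resonance lam_inj B_ge eps_ge0 residual.
  set (P := INR p + 1); set (dl := L / P); set (lj := lam j); set (ph := lj * t0 + ps).
  set (T := test_sum p dl lj ph).
  assert (P_gt0 : 0 < P) by (unfold P; pose proof (pos_INR p); lra).
  assert (dl_gt0 : 0 < dl) by (unfold dl; apply Rdiv_lt_0_compat; assumption).
  assert (P_dl : P * dl = L) by (unfold dl; field; lra).
  assert (step_small : forall k, (k <= N)%nat -> 0 < lam k * dl <= 1)
    by (intros k k_le; pose proof (lam_gt0 k); pose proof (lam_small k k_le); split; [nra | auto]).
  assert (period : P * (lj * dl) = 2 * PI * INR Q)
    by (rewrite <- resonance; unfold lj; rewrite <- P_dl; ring).
  assert (residual_part : Rabs (T (fun h => g (t0 + h))) <= P^2 * (2 * eps * L)).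
  { rewrite <- P_dl; apply (Rabs_test_sum_residual_le p Q) with (l := l); try assumption.
    - apply step_small; assumption.
    - intros h h_range; apply residual; unfold P in P_dl; lra. }
  pose proof (Rabs_test_sum_cos_series_sub_le p dl lj ph t0 N ltac:(lra)) as tail_part.
  assert (diag_part : T (fun h => cos (lam j * (t0 + h) + ps)) = P^2 / 2)
    by (apply (test_sum_cos_diag p Q); [apply step_small; assumption | assumption]).
  assert (offdiag_part :
      Rabs (sum_f_R0 (punctured j (fun k => c k * T (fun h => cos (lam k * (t0 + h) + ps)))) N)
      <= P^2 * (6 * B / L^2)).
  { eapply Rle_trans; [apply Rabs_punctured_test_sum_le; auto|].
    replace (P^2 * (6 * B / L^2)) with (6 / dl^2 * B) by (rewrite <- P_dl; field; lra).
    apply Rmult_le_compat_l; [apply Rlt_le, Rdiv_lt_0_compat, pow_lt; lra | assumption]. }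
  fold P T in tail_part; rewrite (sum_f_R0_punctured _ j N j_le), diag_part in tail_part.
  apply Rabs_le_between in residual_part, tail_part, offdiag_part.
  apply (Rmult_le_reg_l (P^2)); [nra|]; nra.
Qed.

(* The window [p] is chosen after the truncation [N], so that every retained
   frequency still satisfies [lam k * dl <= 1]. *)
Lemma cos_series_residual_bound t0 l eps L B (j Q : nat) :
  0 < L -> lam j * L = 2 * PI * INR Q -> (forall k, k <> j -> lam k <> lam j) ->
  (forall N, sum_f_R0 (punctured j (fun k => c k / (lam k - lam j)^2)) N <= B) -> 0 <= eps ->
  (forall h, 0 < h <= 2 * L -> Rabs (g (t0 + h) - g t0 - l * h) <= eps * h) ->
  c j / 2 <= 2 * eps * L + 6 * B / L^2.
Proof.
  intros L_gt0 resonance lam_inj B_ge eps_ge0 residual.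
  apply Rle_plus_epsilon; intros tau tau_gt0.
  destruct (c_sum tau tau_gt0) as [N0 HN0].
  set (N := max N0 j).
  assert (tail_small : Sc - sum_f_R0 c N < tau).
  { specialize (HN0 N ltac:(lia)); unfold R_dist in HN0; apply Rabs_def2 in HN0; lra. }
  set (M := sum_f_R0 lam N).
  destruct (INR_unbounded (L * M)) as [p Hp].
  assert (lam_small : forall k, (k <= N)%nat -> lam k * (L / (INR p + 1)) <= 1).
  { intros k k_le.
    assert (lam k <= M) by (apply sum_f_R0_ge_term; [intros i; apply Rlt_le, lam_gt0 | auto]).
    pose proof (pos_INR p); pose proof (lam_gt0 k).
    apply (Rmult_le_reg_l (INR p + 1)); [lra|].
    replace ((INR p + 1) * (lam k * (L / (INR p + 1)))) with (lam k * L) by (field; lra).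
    nra. }
  pose proof (cos_series_test_estimate t0 l eps L B j N p Q L_gt0 ltac:(lia) lam_small
                resonance lam_inj (B_ge N) eps_ge0 residual).
  lra.
Qed.

End Cosine_series.

(** * Coefficients and frequencies of F1 *)

Lemma ln_le_compat x y : 0 < x -> x <= y -> ln x <= ln y.
Proof. intros x_gt0 [lt | ->]; [apply Rlt_le, ln_increasing | right]; auto. Qed.

Lemma exp_le_compat x y : x <= y -> exp x <= exp y.
Proof. intros [lt | ->]; [apply Rlt_le, exp_increasing | right]; auto. Qed.

Lemma Rpower_gt0 x p : 0 < Rpower x p.
Proof. apply exp_pos. Qed.

Lemma one_sub_inv_le_ln u : 0 < u -> 1 - / u <= ln u.
Proof.
  intros u_gt0; pose proof (exp_ineq1_le (ln (/ u))) as H.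
  rewrite exp_ln, ln_Rinv in H by (try apply Rinv_0_lt_compat; assumption); lra.
Qed.

Lemma ln_ge1 x : 3 <= x -> 1 <= ln x.
Proof.
  intros; pose proof exp_le_3; rewrite <- (ln_exp 1).
  apply ln_le_compat; [apply exp_pos | lra].
Qed.

Lemma inv_le_ln_sub_ln_pred X : 1 < X -> / X <= ln X - ln (X - 1).
Proof.
  intros X_gt1;
  pose proof (one_sub_inv_le_ln (X / (X - 1)) ltac:(apply Rdiv_lt_0_compat; lra)) as H.
  unfold Rdiv in H; rewrite ln_mult, ln_Rinv in H by (try apply Rinv_0_lt_compat; lra).
  replace (/ (X * / (X - 1))) with (1 - / X) in H by (field; lra).
  lra.
Qed.

(* Convexity of [exp] gives [z^(1-a) - y^(1-a) >= (a-1) y^(1-a) (ln y - ln z)], and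
   [ln y - ln z >= (y - z) / y]. *)
Lemma Rpower_one_sub_diff_ge a y z : 1 < a -> 0 < z < y ->
  (a - 1) * (y - z) * Rpower y (- a) <= Rpower z (1 - a) - Rpower y (1 - a).
Proof.
  intros a_gt1 zy.
  assert (ln_gap : (y - z) / y <= ln y - ln z).
  { pose proof (one_sub_inv_le_ln (y / z) ltac:(apply Rdiv_lt_0_compat; lra)) as H.
    unfold Rdiv in H; rewrite ln_mult, ln_Rinv in H by (try apply Rinv_0_lt_compat; lra).
    replace (/ (y * / z)) with (z / y) in H by (field; lra).
    replace ((y - z) / y) with (1 - z / y) by (field; lra); lra. }
  assert (split_z : Rpower z (1 - a) = Rpower y (1 - a) * exp ((a - 1) * (ln y - ln z)))
    by (unfold Rpower; rewrite <- exp_plus; f_equal; ring).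
  assert (split_y : Rpower y (- a) = Rpower y (1 - a) / y).
  { unfold Rpower, Rdiv; rewrite <- (exp_ln y) at 3 by lra.
    rewrite <- exp_Ropp, <- exp_plus; f_equal; ring. }
  pose proof (exp_ineq1_le ((a - 1) * (ln y - ln z))).
  pose proof (Rpower_gt0 y (1 - a)) as E_gt0.
  rewrite split_z, split_y.
  apply Rle_trans with (Rpower y (1 - a) * ((a - 1) * (ln y - ln z))); [|nra].
  replace ((a - 1) * (y - z) * (Rpower y (1 - a) / y))
    with (Rpower y (1 - a) * ((a - 1) * ((y - z) / y))) by (field; lra).
  apply Rmult_le_compat_l; [lra|]; apply Rmult_le_compat_l; lra.
Qed.

Lemma jj_ge2 n : 2 <= jj n.
Proof. unfold jj; rewrite plus_INR; pose proof (pos_INR n); simpl; lra. Qed.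

Lemma jj_sub k j : jj k - jj j = INR k - INR j.
Proof. unfold jj; rewrite !plus_INR; ring. Qed.

Lemma jj_S n : jj (S n) = jj n + 1.
Proof. unfold jj; rewrite !plus_INR, S_INR; ring. Qed.

Lemma ln_jj_gt0 n : 0 < ln (jj n).
Proof.
  pose proof ln_lt_2; pose proof (ln_le_compat 2 (jj n) ltac:(lra) (jj_ge2 n)); lra.
Qed.

Lemma ln_jj_le j k : (j <= k)%nat -> ln (jj j) <= ln (jj k).
Proof.
  intros jk; apply ln_le_compat; [pose proof (jj_ge2 j); lra|].
  pose proof (jj_sub k j); apply le_INR in jk; lra.
Qed.

Lemma Rpower_ln_jj_ge1 s j : 0 <= s -> (1 <= j)%nat -> 1 <= Rpower (ln (jj j)) s.
Proof.
  intros s_ge0 j_ge1.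
  assert (1 <= ln (jj j))
    by (apply ln_ge1; unfold jj; rewrite plus_INR; apply le_INR in j_ge1; simpl in *; lra).
  rewrite <- (Rpower_O (ln (jj j))) by lra; apply Rle_Rpower; lra.
Qed.

Lemma Rpower_ln_jj_unbounded s M j0 : 0 < s ->
  exists j, (j0 <= j)%nat /\ M < Rpower (ln (jj j)) s.
Proof.
  intros s_gt0.
  set (Y := Rpower (Rmax M 0 + 1) (/ s)).
  destruct (INR_unbounded (exp Y)) as [m m_large].
  exists (Nat.max j0 m); split; [lia|].
  assert (Y_le : Y <= ln (jj (Nat.max j0 m))).
  { rewrite <- (ln_exp Y); apply ln_le_compat; [apply exp_pos|].
    unfold jj; rewrite plus_INR; pose proof (le_INR m (Nat.max j0 m) ltac:(lia)); simpl; lra. }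
  assert (Rpower Y s <= Rpower (ln (jj (Nat.max j0 m))) s)
    by (apply Rle_Rpower_l; [lra | split; [apply Rpower_gt0 | assumption]]).
  assert (Rpower Y s = Rmax M 0 + 1).
  { unfold Y; rewrite Rpower_mult; replace (/ s * s) with 1 by (field; lra).
    apply Rpower_1; pose proof (Rmax_r M 0); lra. }
  pose proof (Rmax_l M 0); lra.
Qed.

Definition coef (a : R) (n : nat) : R := / (jj n * Rpower (ln (jj n)) a).
Definition freq (b : R) (n : nat) : R := jj n ^ 2 * Rpower (ln (jj n)) b.

Lemma coef_gt0 a n : 0 < coef a n.
Proof.
  apply Rinv_0_lt_compat, Rmult_lt_0_compat; [pose proof (jj_ge2 n); lra | apply Rpower_gt0].
Qed.

Lemma freq_gt0 b n : 0 < freq b n.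
Proof. apply Rmult_lt_0_compat; [pose proof (jj_ge2 n); nra | apply Rpower_gt0]. Qed.

Lemma re_term_eq a b t n : re_term a b t n = coef a n * cos (freq b n * t + 0).
Proof.
  unfold re_term, coef, freq, Rdiv; rewrite Rplus_0_r, Rmult_comm; do 2 f_equal; ring.
Qed.

Lemma im_term_eq a b t n : im_term a b t n = coef a n * cos (freq b n * t + - (PI/2)).
Proof.
  unfold im_term, coef, freq, Rdiv; rewrite Rmult_comm; f_equal.
  rewrite <- cos_neg, <- cos_shift; f_equal; field.
Qed.

Lemma freq_lt b j k : 0 <= b -> (j < k)%nat -> freq b j < freq b k.
Proof.
  intros b_ge0 jk; unfold freq.
  pose proof (le_INR (S j) k jk); rewrite S_INR in *.
  pose proof (jj_sub k j); pose proof (jj_ge2 j).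
  assert (Rpower (ln (jj j)) b <= Rpower (ln (jj k)) b)
    by (apply Rle_Rpower_l; [lra | split; [apply ln_jj_gt0 | apply ln_jj_le; lia]]).
  pose proof (Rpower_gt0 (ln (jj j)) b).
  assert (jj j ^ 2 < jj k ^ 2) by nra.
  nra.
Qed.

Lemma freq_neq b j : 0 <= b -> forall k, k <> j -> freq b k <> freq b j.
Proof.
  intros b_ge0 k k_neq; destruct (Compare_dec.lt_dec k j) as [kj | jk].
  - pose proof (freq_lt b k j b_ge0 kj); lra.
  - pose proof (freq_lt b j k b_ge0 ltac:(lia)); lra.
Qed.

Lemma freq_mul_resonant_length b j :
  freq b j * (64 * PI / (jj j * Rpower (ln (jj j)) b)) = 2 * PI * INR (32 * (j + 2)).
Proof.
  pose proof (Rpower_gt0 (ln (jj j)) b); pose proof (jj_ge2 j).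
  rewrite mult_INR; unfold freq; fold (jj j); simpl INR; field; lra.
Qed.

Section Coefficients.
Variable a : R.
Hypothesis a_gt1 : 1 < a.

Lemma coef_S_le n :
  coef a (S n) <= (Rpower (ln (jj n)) (1 - a) - Rpower (ln (jj (S n))) (1 - a)) / (a - 1).
Proof.
  set (X := jj (S n)); set (y := ln X); set (z := ln (jj n)).
  assert (X_ge3 : 3 <= X) by (unfold X; rewrite jj_S; pose proof (jj_ge2 n); lra).
  assert (ln_step : / X <= y - z)
    by (unfold y, z; replace (jj n) with (X - 1) by (unfold X; rewrite jj_S; ring);
        apply inv_le_ln_sub_ln_pred; lra).
  assert (z_gt0 : 0 < z) by apply ln_jj_gt0.
  pose proof (Rinv_0_lt_compat X ltac:(lra)).
  pose proof (Rpower_one_sub_diff_ge a y z a_gt1 ltac:(lra)) as diff_ge.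
  pose proof (Rpower_gt0 y (- a)).
  apply (Rmult_le_reg_l (a - 1)); [lra|].
  replace ((a - 1) * ((Rpower z (1 - a) - Rpower y (1 - a)) / (a - 1)))
    with (Rpower z (1 - a) - Rpower y (1 - a)) by (field; lra).
  eapply Rle_trans; [|exact diff_ge].
  replace (coef a (S n)) with (/ X * Rpower y (- a)).
  - rewrite Rmult_assoc; apply Rmult_le_compat_l; [lra | apply Rmult_le_compat_r; lra].
  - unfold coef, Rpower; fold X y; rewrite Rinv_mult, <- exp_Ropp; do 2 f_equal; ring.
Qed.

Lemma coef_summable : exists S, infinite_sum (coef a) S.
Proof.
  set (v := fun n => Rpower (ln (jj n)) (1 - a) / (a - 1)).
  assert (v_ge0 : forall n, 0 <= v n)
    by (intros; apply Rlt_le, Rdiv_lt_0_compat; [apply Rpower_gt0 | lra]).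
  assert (partial_le : forall n, sum_f_R0 (coef a) n <= coef a 0 + v 0%nat - v n).
  { induction n as [|n IH]; simpl; [lra|].
    pose proof (coef_S_le n); unfold v, Rdiv in *; lra. }
  destruct (growing_cv (fun n => sum_f_R0 (coef a) n)) as [l Hl].
  - intros n; simpl; pose proof (coef_gt0 a (S n)); lra.
  - exists (coef a 0 + v 0%nat); intros x [n ->].
    pose proof (partial_le n); pose proof (v_ge0 n); lra.
  - exists l; exact Hl.
Qed.

End Coefficients.

(** * Frequency gaps *)

(* On integers [e >= 1], [/ e^2 <= / (e^2 - 1/4) = / (e - 1/2) - / (e + 1/2)], so this
   function grows by at least [/ (k - j)^2] from [k - j] to [k + 1 - j]. *)
Definition dist_majorant (d : R) : R :=
  if Rle_dec d 0 then / (1/2 - d) else 4 - / (d - 1/2).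

Lemma INR_lt_succ_le k j : (k < j)%nat -> INR k + 1 <= INR j.
Proof. intros; rewrite <- S_INR; apply le_INR; lia. Qed.

Lemma inv_sqr_dist_le_step j k :
  punctured j (fun k => / (INR k - INR j)^2) k <=
  dist_majorant (INR (S k) - INR j) - dist_majorant (INR k - INR j).
Proof.
  unfold punctured, dist_majorant; rewrite S_INR.
  destruct (Nat.eq_dec k j) as [-> | k_neq].
  - replace (INR j + 1 - INR j) with 1 by ring; replace (INR j - INR j) with 0 by ring.
    destruct (Rle_dec 1 0); [lra|]; destruct (Rle_dec 0 0); [|lra].
    replace (1 - 1/2) with (/2) by field; replace (1/2 - 0) with (/2) by field.
    rewrite Rinv_inv; lra.
  - destruct (Compare_dec.lt_dec k j) as [kj | jk].
    + pose proof (INR_lt_succ_le _ _ kj); set (e := INR j - INR k).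
      replace (INR k + 1 - INR j) with (1 - e) by (unfold e; ring).
      replace (INR k - INR j) with (- e) by (unfold e; ring).
      destruct (Rle_dec (1 - e) 0); [|unfold e in *; lra].
      destruct (Rle_dec (- e) 0); [|unfold e in *; lra].
      assert (1 <= e) by (unfold e; lra).
      replace ((- e)^2) with (e^2) by ring.
      replace (/ (1/2 - (1 - e)) - / (1/2 - - e)) with (/ (e^2 - /4))
        by (field; repeat split; nra).
      apply Rinv_le_contravar; nra.
    + pose proof (INR_lt_succ_le j k ltac:(lia)); set (e := INR k - INR j).
      replace (INR k + 1 - INR j) with (e + 1) by (unfold e; ring).
      assert (1 <= e) by (unfold e; lra).
      destruct (Rle_dec (e + 1) 0); [lra|]; destruct (Rle_dec e 0); [lra|].
      replace (4 - / (e + 1 - 1/2) - (4 - / (e - 1/2))) with (/ (e^2 - /4))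
        by (field; repeat split; nra).
      apply Rinv_le_contravar; nra.
Qed.

Lemma dist_majorant_range k j : 0 <= dist_majorant (INR k - INR j) <= 4.
Proof.
  unfold dist_majorant; destruct (Rle_dec (INR k - INR j) 0) as [le0 | gt0].
  - assert (inv_le : / (1/2 - (INR k - INR j)) <= / / 2) by (apply Rinv_le_contravar; lra).
    rewrite Rinv_inv in inv_le.
    split; [apply Rlt_le, Rinv_0_lt_compat; lra | lra].
  - assert (1 <= INR k - INR j)
      by (destruct (Compare_dec.le_lt_dec k j) as [kj | jk];
          [apply le_INR in kj; lra | pose proof (INR_lt_succ_le _ _ jk); lra]).
    assert (inv_le : / (INR k - INR j - 1/2) <= / / 2) by (apply Rinv_le_contravar; lra).
    rewrite Rinv_inv in inv_le.
    assert (0 < / (INR k - INR j - 1/2)) by (apply Rinv_0_lt_compat; lra).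
    lra.
Qed.

Lemma sum_f_R0_telescope (f : nat -> R) N :
  sum_f_R0 (fun k => f (S k) - f k) N = f (S N) - f 0%nat.
Proof. induction N as [|N IH]; simpl; [|rewrite IH]; ring. Qed.

Lemma sum_inv_sqr_dist_le j N : sum_f_R0 (punctured j (fun k => / (INR k - INR j)^2)) N <= 4.
Proof.
  eapply Rle_trans; [apply (sum_Rle _ (fun k => dist_majorant (INR (S k) - INR j) -
                                                dist_majorant (INR k - INR j)));
                     intros; apply inv_sqr_dist_le_step|].
  rewrite (sum_f_R0_telescope (fun k => dist_majorant (INR k - INR j))).
  pose proof (dist_majorant_range (S N) j); pose proof (dist_majorant_range 0 j); lra.
Qed.

Lemma Rpower_half_lt_transfer a b u v : 0 < a <= b -> 0 < u -> 0 < v ->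
  Rpower v b / 2 < Rpower u b -> Rpower v a / 2 <= Rpower u a.
Proof.
  intros ab u_gt0 v_gt0 half_lt.
  assert (via_b : forall w, Rpower w a = Rpower (Rpower w b) (a / b))
    by (intros; rewrite Rpower_mult; f_equal; field; lra).
  assert (ratio : 0 <= a / b <= 1).
  { split; [apply Rlt_le, Rdiv_lt_0_compat; lra|].
    apply (Rmult_le_reg_l b); [lra|]; replace (b * (a / b)) with a by (field; lra); lra. }
  rewrite !via_b.
  pose proof (Rpower_gt0 v b).
  apply Rle_trans with (Rpower (Rpower v b / 2) (a / b)); [|apply Rle_Rpower_l; lra].
  change (Rpower v b / 2) with (Rpower v b * / 2); rewrite <- Rpower_mult_distr by lra.
  assert (/2 <= Rpower (/2) (a / b)).
  { unfold Rpower; rewrite <- (exp_ln (/2)) at 1 by lra; apply exp_le_compat.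
    assert (ln (/2) < 0) by (rewrite ln_Rinv by lra; pose proof ln_lt_2; lra).
    nra. }
  pose proof (Rpower_gt0 (Rpower v b) (a / b)); unfold Rdiv; nra.
Qed.

Section Frequency_gaps.
Variables a b : R.
Hypothesis a_gt1 : 1 < a.
Hypothesis a_le_b : a <= b.

Lemma coef_le_of_freq_gt j k : freq b j / 2 < freq b k -> coef a k <= 4 * coef a j.
Proof.
  intros freq_gt; unfold coef.
  set (xk := jj k); set (xj := jj j); set (ak := Rpower (ln xk) a); set (aj := Rpower (ln xj) a).
  assert (2 <= xk) by apply jj_ge2; assert (2 <= xj) by apply jj_ge2.
  assert (0 < ak) by apply Rpower_gt0; assert (0 < aj) by apply Rpower_gt0.
  destruct (Compare_dec.le_lt_dec j k) as [jk | kj].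
  - assert (xj <= xk) by (unfold xj, xk; pose proof (jj_sub k j); apply le_INR in jk; lra).
    assert (aj <= ak)
      by (apply Rle_Rpower_l; [lra | split; [apply ln_jj_gt0 | apply ln_jj_le; assumption]]).
    assert (/ (xk * ak) <= / (xj * aj))
      by (apply Rinv_le_contravar; [nra | apply Rmult_le_compat; lra]).
    pose proof (Rinv_0_lt_compat (xj * aj) ltac:(nra)); lra.
  - assert (xk <= xj) by (unfold xj, xk; pose proof (jj_sub j k); pose proof (INR_lt_succ_le _ _ kj); lra).
    unfold freq in freq_gt; fold xk xj in freq_gt.
    set (Ak := Rpower (ln xk) b) in *; set (Aj := Rpower (ln xj) b) in *.
    assert (0 < Ak) by apply Rpower_gt0; assert (0 < Aj) by apply Rpower_gt0.
    assert (Ak <= Aj)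
      by (apply Rle_Rpower_l; [lra | split; [apply ln_jj_gt0 | apply ln_jj_le; lia]]).
    assert (Aj / 2 < Ak) by (assert (xk^2 <= xj^2) by nra; nra).
    assert (xj / 2 <= xk) by (assert (xj^2 / 2 < xk^2) by nra; nra).
    assert (aj / 2 <= ak)
      by (apply (Rpower_half_lt_transfer a b); [lra | apply ln_jj_gt0 | apply ln_jj_gt0 | assumption]).
    replace (4 * / (xj * aj)) with (/ ((xj / 2) * (aj / 2))) by (field; lra).
    apply Rinv_le_contravar; [nra | apply Rmult_le_compat; lra].
Qed.

Lemma freq_gap_ge j k : freq b j / 2 < freq b k ->
  Rabs (jj k - jj j) * (jj j * Rpower (ln (jj j)) b) / 2 <= Rabs (freq b k - freq b j).
Proof.
  intros freq_gt; unfold freq in *.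
  set (xk := jj k) in *; set (xj := jj j) in *.
  set (Ak := Rpower (ln xk) b) in *; set (Aj := Rpower (ln xj) b) in *.
  assert (2 <= xk) by apply jj_ge2; assert (2 <= xj) by apply jj_ge2.
  assert (0 < Ak) by apply Rpower_gt0; assert (0 < Aj) by apply Rpower_gt0.
  destruct (Compare_dec.le_lt_dec j k) as [jk | kj].
  - assert (xj <= xk) by (unfold xj, xk; pose proof (jj_sub k j); apply le_INR in jk; lra).
    assert (Aj <= Ak)
      by (apply Rle_Rpower_l; [lra | split; [apply ln_jj_gt0 | apply ln_jj_le; assumption]]).
    assert (xk^2 * Aj <= xk^2 * Ak) by (apply Rmult_le_compat_l; nra).
    assert (xj^2 * Aj <= xk^2 * Aj) by (apply Rmult_le_compat_r; nra).
    assert ((xk - xj) * (xj * Aj / 2) <= (xk - xj) * ((xk + xj) * Aj))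
      by (apply Rmult_le_compat_l; nra).
    rewrite !Rabs_right by nra; nra.
  - assert (xk <= xj) by (unfold xj, xk; pose proof (jj_sub j k); pose proof (INR_lt_succ_le _ _ kj); lra).
    assert (Ak <= Aj)
      by (apply Rle_Rpower_l; [lra | split; [apply ln_jj_gt0 | apply ln_jj_le; lia]]).
    assert (Aj / 2 < Ak) by (assert (xk^2 <= xj^2) by nra; nra).
    assert (xj^2 * Ak <= xj^2 * Aj) by (apply Rmult_le_compat_l; nra).
    assert (xk^2 * Ak <= xj^2 * Ak) by (apply Rmult_le_compat_r; nra).
    rewrite !Rabs_left1 by nra.
    assert (xj * Aj / 2 <= (xj + xk) * Ak) by nra.
    assert ((xj - xk) * (xj * Aj / 2) <= (xj - xk) * ((xj + xk) * Ak))
      by (apply Rmult_le_compat_l; lra).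
    nra.
Qed.

Lemma coef_div_freq_gap_le j k : k <> j ->
  coef a k / (freq b k - freq b j)^2 <=
  16 * coef a j / (jj j * Rpower (ln (jj j)) b)^2 / (INR k - INR j)^2 +
  4 * coef a k / freq b j ^ 2.
Proof.
  intros k_neq.
  set (G := jj j * Rpower (ln (jj j)) b); set (d := INR k - INR j).
  assert (G_gt0 : 0 < G) by (apply Rmult_lt_0_compat; [pose proof (jj_ge2 j); lra | apply Rpower_gt0]).
  assert (d_ne0 : d <> 0) by (intros E; apply k_neq, INR_eq; unfold d in E; lra).
  assert (d_sq : 0 < d^2) by (rewrite <- Rsqr_pow2; apply Rsqr_pos_lt; assumption).
  pose proof (coef_gt0 a k); pose proof (coef_gt0 a j); pose proof (freq_gt0 b j).
  assert (first_ge0 : 0 <= 16 * coef a j / G^2 / d^2)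
    by (apply Rlt_le, Rdiv_lt_0_compat; [apply Rdiv_lt_0_compat; [lra | nra] | assumption]).
  assert (second_ge0 : 0 <= 4 * coef a k / freq b j ^ 2)
    by (apply Rlt_le, Rdiv_lt_0_compat; [lra | nra]).
  destruct (Rlt_dec (freq b j / 2) (freq b k)) as [near | far].
  - pose proof (freq_gap_ge j k near) as gap; fold G in gap.
    rewrite jj_sub in gap; fold d in gap.
    assert (gap_sq : d^2 * G^2 / 4 <= (freq b k - freq b j)^2).
    { rewrite <- (pow2_abs d), <- (pow2_abs (freq b k - freq b j)).
      pose proof (Rabs_pos d); replace (Rabs d ^ 2 * G ^ 2 / 4) with ((Rabs d * G / 2)^2) by field.
      apply pow_incr; split; [nra | assumption]. }
    pose proof (coef_le_of_freq_gt j k near).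
    replace (16 * coef a j / G^2 / d^2) with (4 * coef a j / (d^2 * G^2 / 4))
      by (field; split; lra).
    apply Rle_trans with (4 * coef a j / (d^2 * G^2 / 4)); [|lra].
    assert (lower_gt0 : 0 < d^2 * G^2 / 4)
      by (apply Rdiv_lt_0_compat; [apply Rmult_lt_0_compat; [lra | apply pow_lt; lra] | lra]).
    unfold Rdiv at 1 2; apply Rmult_le_compat; [lra | apply Rlt_le, Rinv_0_lt_compat; lra | lra |].
    apply Rinv_le_contravar; assumption.
  - assert (gap_sq : freq b j ^ 2 / 4 <= (freq b k - freq b j)^2).
    { pose proof (freq_gt0 b k); replace (freq b j ^ 2 / 4) with ((freq b j / 2)^2) by field.
      replace ((freq b k - freq b j)^2) with ((freq b j - freq b k)^2) by ring.
      apply pow_incr; lra. }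
    apply Rle_trans with (4 * coef a k / freq b j ^ 2); [|lra].
    replace (4 * coef a k / freq b j ^ 2) with (coef a k / (freq b j ^ 2 / 4)) by (field; lra).
    unfold Rdiv; apply Rmult_le_compat_l; [lra|].
    apply Rinv_le_contravar; [nra | assumption].
Qed.

Lemma sum_coef_div_freq_gap_le j Sc : infinite_sum (coef a) Sc -> forall N,
  sum_f_R0 (punctured j (fun k => coef a k / (freq b k - freq b j)^2)) N <=
  64 * coef a j / (jj j * Rpower (ln (jj j)) b)^2 + 4 * Sc / freq b j ^ 2.
Proof.
  intros coef_sum N.
  set (C := 16 * coef a j / (jj j * Rpower (ln (jj j)) b)^2).
  assert (C_ge0 : 0 <= C).
  { apply Rlt_le, Rdiv_lt_0_compat; [pose proof (coef_gt0 a j); lra|].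
    apply pow_lt, Rmult_lt_0_compat; [pose proof (jj_ge2 j); lra | apply Rpower_gt0]. }
  assert (D_ge0 : 0 <= 4 / freq b j ^ 2)
    by (apply Rlt_le, Rdiv_lt_0_compat; [lra | apply pow_lt, freq_gt0]).
  eapply Rle_trans.
  { apply (sum_Rle _ (fun k => C * punctured j (fun k => / (INR k - INR j)^2) k +
                               4 / freq b j ^ 2 * coef a k)).
    intros k _; unfold punctured; destruct (Nat.eq_dec k j) as [_ | k_neq].
    - pose proof (coef_gt0 a k); nra.
    - pose proof (coef_div_freq_gap_le j k k_neq); unfold C, Rdiv in *; lra. }
  rewrite sum_plus.
  rewrite (sum_eq _ (fun k => punctured j (fun k => / (INR k - INR j)^2) k * C)),
    (sum_eq (fun k => _ * coef a k) (fun k => coef a k * (4 / freq b j ^ 2))),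
    <- !scal_sum by (intros; ring).
  pose proof (sum_inv_sqr_dist_le j N) as dist_sum.
  pose proof (sum_incr (coef a) N Sc coef_sum (fun k => Rlt_le _ _ (coef_gt0 a k))) as coef_partial.
  replace (64 * coef a j / (jj j * Rpower (ln (jj j)) b) ^ 2) with (C * 4)
    by (unfold C; field; pose proof (jj_ge2 j); pose proof (Rpower_gt0 (ln (jj j)) b); lra).
  replace (4 * Sc / freq b j ^ 2) with (4 / freq b j ^ 2 * Sc) by (field; apply Rgt_not_eq, freq_gt0).
  apply Rplus_le_compat; apply Rmult_le_compat_l; assumption.
Qed.

End Frequency_gaps.

(** * Choice of the scale and conclusion *)

Lemma ln_Rpower_le_sqrt a x : 0 < a -> 1 < x -> Rpower (ln x) a <= Rpower (2 * a) a * sqrt x.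
Proof.
  intros a_gt0 x_gt1.
  set (u := Rpower x (/ (2 * a))).
  assert (u_gt0 : 0 < u) by apply Rpower_gt0.
  assert (ln_u : ln u = / (2 * a) * ln x) by apply ln_Rpower.
  assert (ln_u_le : ln u <= u)
    by (pose proof (exp_ineq1_le (ln u)) as H; rewrite exp_ln in H by assumption; lra).
  assert (ln_x_gt0 : 0 < ln x) by (rewrite <- ln_1; apply ln_increasing; lra).
  assert (ln_x_le : ln x <= 2 * a * u)
    by (replace (ln x) with (2 * a * ln u) by (rewrite ln_u; field; lra); nra).
  apply Rle_trans with (Rpower (2 * a * u) a); [apply Rle_Rpower_l; lra|].
  rewrite <- Rpower_mult_distr by lra; apply Rmult_le_compat_l; [apply Rlt_le, Rpower_gt0|].
  unfold u; rewrite Rpower_mult, <- Rpower_sqrt by lra.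
  right; f_equal; field; lra.
Qed.

Lemma scaled_Rpower_ln_le a Sc x : 0 < a -> 0 <= Sc -> 1 < x ->
  (Sc * Rpower (2 * a) a / 192)^2 < x -> Sc * Rpower (ln x) a <= 192 * x.
Proof.
  intros a_gt0 Sc_ge0 x_gt1 x_large.
  set (K := Rpower (2 * a) a); assert (K_gt0 : 0 < K) by apply Rpower_gt0.
  assert (root_large : Sc * K / 192 < sqrt x).
  { rewrite <- (sqrt_pow2 (Sc * K / 192)) by (apply Rmult_le_pos; [nra | lra]).
    apply sqrt_lt_1_alt; split; [apply pow2_ge_0 | assumption]. }
  pose proof (sqrt_sqrt x ltac:(lra)); pose proof (sqrt_pos x).
  apply Rle_trans with (Sc * (K * sqrt x));
    [apply Rmult_le_compat_l; [assumption | apply ln_Rpower_le_sqrt; assumption] | nra].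
Qed.

Lemma resonant_length_lt x A rho : 0 < x -> 1 <= A -> 128 * PI / rho < x -> 0 < rho ->
  2 * (64 * PI / (x * A)) < rho.
Proof.
  intros x_gt0 A_ge1 x_large rho_gt0; pose proof PI_RGT_0.
  apply Rle_lt_trans with (128 * PI / x).
  - unfold Rdiv; replace (2 * (64 * PI * / (x * A))) with (128 * PI * / (x * A)) by ring.
    apply Rmult_le_compat_l; [lra | apply Rinv_le_contravar; nra].
  - apply (Rmult_lt_reg_r (x / rho)); [apply Rdiv_lt_0_compat; lra|].
    replace (128 * PI / x * (x / rho)) with (128 * PI / rho) by (field; lra).
    replace (rho * (x / rho)) with x by (field; lra).
    assumption.
Qed.

Lemma PI_sqr_gt9 : 9 < PI^2.
Proof. pose proof PI_RGT_0; pose proof PI2_3_2; nra. Qed.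

Lemma three_div_32_PI_sqr_le : 3 / (32 * PI^2) <= / 8.
Proof.
  pose proof PI_RGT_0; pose proof PI_sqr_gt9.
  apply (Rmult_le_reg_l (8 * (32 * PI^2))); [nra|].
  replace (8 * (32 * PI^2) * (3 / (32 * PI^2))) with 24 by (field; lra).
  replace (8 * (32 * PI^2) * / 8) with (32 * PI^2) by field.
  lra.
Qed.

Lemma scaled_tail_share_le Sc x al : 0 <= Sc -> 0 < x -> 0 < al -> Sc * al <= 192 * x ->
  3 * Sc / (512 * PI^2 * x^2) <= / (x * al) / 8.
Proof.
  intros Sc_ge0 x_gt0 al_gt0 Sc_small; pose proof PI_sqr_gt9.
  assert (x_sq : 0 < x^2) by nra.
  apply Rle_trans with (3 * Sc / (512 * 9 * x^2)).
  - unfold Rdiv; apply Rmult_le_compat_l; [lra|].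
    apply Rinv_le_contravar; [nra | apply Rmult_le_compat_r; lra].
  - replace (3 * Sc / (512 * 9 * x ^ 2)) with (Sc * al / (1536 * x^2 * al)) by (field; lra).
    replace (/ (x * al) / 8) with (192 * x / (1536 * x^2 * al)) by (field; lra).
    unfold Rdiv; apply Rmult_le_compat_r; [|assumption].
    apply Rlt_le, Rinv_0_lt_compat, Rmult_lt_0_compat; lra.
Qed.

(* With [L = 64 PI / (x (ln x)^b)] the off-diagonal terms contribute at most a quarter of
   the diagonal term, which leaves [c/4 <= 2 eps L] with [c L^-1 ~ (ln x)^(b-a)]. *)
Lemma resonant_scale_bound a b eps Sc x : 0 <= Sc -> 3 <= x -> 0 <= b ->
  Sc * Rpower (ln x) a <= 192 * x ->
  / (x * Rpower (ln x) a) / 2 <=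
    2 * eps * (64 * PI / (x * Rpower (ln x) b)) +
    6 * (64 * / (x * Rpower (ln x) a) / (x * Rpower (ln x) b)^2 +
         4 * Sc / (x^2 * Rpower (ln x) b)^2) / (64 * PI / (x * Rpower (ln x) b))^2 ->
  Rpower (ln x) (b - a) <= 512 * PI * eps.
Proof.
  intros Sc_ge0 x_ge3 b_ge0 Sc_small estimate.
  set (ell := ln x) in *; set (A := Rpower ell b) in *; set (al := Rpower ell a) in *.
  set (c := / (x * al)) in *; set (G := x * A) in *.
  assert (ell_ge1 : 1 <= ell) by (apply ln_ge1; assumption).
  assert (A_ge1 : 1 <= A) by (unfold A; rewrite <- (Rpower_O ell) by lra; apply Rle_Rpower; lra).
  assert (al_gt0 : 0 < al) by apply Rpower_gt0.
  assert (c_gt0 : 0 < c) by (apply Rinv_0_lt_compat; nra).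
  assert (G_gt0 : 0 < G) by (unfold G; nra).
  pose proof PI_RGT_0.
  replace (6 * (64 * c / G ^ 2 + 4 * Sc / (x ^ 2 * A) ^ 2) / (64 * PI / G) ^ 2)
    with (c * (3 / (32 * PI^2)) + 3 * Sc / (512 * PI^2 * x^2)) in estimate
    by (unfold G; field; repeat split; lra).
  assert (diag_share : c * (3 / (32 * PI^2)) <= c / 8)
    by (pose proof three_div_32_PI_sqr_le; unfold Rdiv at 2; apply Rmult_le_compat_l; lra).
  pose proof (scaled_tail_share_le Sc x al Sc_ge0 ltac:(lra) al_gt0 Sc_small) as tail_share.
  fold c in tail_share.
  replace (Rpower ell (b - a)) with (c * G).
  - apply (Rmult_le_reg_r (/ G)); [apply Rinv_0_lt_compat; lra|].
    replace (c * G * / G) with c by (field; lra).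
    replace (512 * PI * eps * / G) with (4 * (2 * eps * (64 * PI / G))) by (field; lra).
    lra.
  - unfold c, G, A, al.
    replace (Rpower ell b) with (Rpower ell (b - a) * Rpower ell a)
      by (rewrite <- Rpower_plus; f_equal; ring).
    field; split; [apply Rgt_not_eq, Rpower_gt0 | lra].
Qed.

Section F1_series.
Variables a b : R.
Hypothesis a_gt1 : 1 < a.
Hypothesis a_le_b : a <= b.
Variables (ps : R) (g : R -> R).
Hypothesis g_sum : forall t, infinite_sum (fun k => coef a k * cos (freq b k * t + ps)) (g t).

Lemma residual_log_gap_le t0 l eps rho : 0 < rho -> 0 <= eps ->
  (forall h, 0 < h < rho -> Rabs (g (t0 + h) - g t0 - l * h) <= eps * h) ->
  exists j0, forall j, (j0 <= j)%nat -> Rpower (ln (jj j)) (b - a) <= 512 * PI * eps.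
Proof.
  intros rho_gt0 eps_ge0 residual.
  destruct (coef_summable a a_gt1) as [Sc coef_sum].
  assert (Sc_ge0 : 0 <= Sc)
    by (pose proof (sum_incr (coef a) 0 Sc coef_sum (fun k => Rlt_le _ _ (coef_gt0 a k)));
        simpl in *; pose proof (coef_gt0 a 0); lra).
  set (K1 := (Sc * Rpower (2 * a) a / 192)^2); set (K2 := 128 * PI / rho).
  destruct (INR_unbounded (Rmax 3 (Rmax K1 K2))) as [j0 j0_large].
  exists j0; intros j j_ge.
  set (x := jj j).
  assert (x_large : Rmax 3 (Rmax K1 K2) < x)
    by (unfold x, jj; rewrite plus_INR; apply le_INR in j_ge; simpl; lra).
  pose proof (Rmax_l 3 (Rmax K1 K2)); pose proof (Rmax_r 3 (Rmax K1 K2)).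
  pose proof (Rmax_l K1 K2); pose proof (Rmax_r K1 K2).
  assert (A_ge1 : 1 <= Rpower (ln x) b)
    by (rewrite <- (Rpower_O (ln x)) by (pose proof (ln_ge1 x); lra);
        apply Rle_Rpower; [apply ln_ge1 | ]; lra).
  set (L := 64 * PI / (x * Rpower (ln x) b)).
  assert (L_gt0 : 0 < L) by (pose proof PI_RGT_0; apply Rdiv_lt_0_compat; nra).
  assert (twice_L_lt : 2 * L < rho)
    by (apply resonant_length_lt; unfold K2 in *; lra).
  pose proof (freq_mul_resonant_length b j) as resonance; fold x L in resonance.
  pose proof (freq_neq b j ltac:(lra)) as freq_inj.
  pose proof (cos_series_residual_bound (coef a) (freq b) ps Sc g
                (fun k => Rlt_le _ _ (coef_gt0 a k)) (freq_gt0 b) coef_sum g_sum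
                t0 l eps L _ j (32 * (j + 2)) L_gt0 resonance freq_inj
                (sum_coef_div_freq_gap_le a b a_gt1 a_le_b j Sc coef_sum) eps_ge0
                (fun h h_range => residual h ltac:(lra))) as estimate.
  apply (resonant_scale_bound a b eps Sc x); try lra.
  - apply scaled_Rpower_ln_le; unfold K1 in *; lra.
  - exact estimate.
Qed.

Lemma cos_series_continuous : continuity g.
Proof.
  destruct (coef_summable a a_gt1) as [Sc coef_sum].
  set (fn := fun k t => coef a k * cos (freq b k * t + ps)).
  assert (abs_sum : Un_cv (fun n => sum_f_R0 (fun k => Rabs (coef a k)) n) Sc).
  { apply (infinite_sum_ext (coef a)); [|exact coef_sum].
    intros; rewrite Rabs_right; [reflexivity | apply Rle_ge, Rlt_le, coef_gt0]. }
  exact (SFL_continuity fn (fun t => exist _ (g t) (g_sum t))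
           (fun r => existT _ (coef a) (exist _ Sc (conj abs_sum
              (fun k t _ => Rabs_mul_cos_le _ _ (Rlt_le _ _ (coef_gt0 a k))))))
           (fun k => ltac:(unfold fn; reg))).
Qed.

Lemma cos_series_bounded : bounded_R g.
Proof.
  destruct (coef_summable a a_gt1) as [Sc coef_sum].
  exists Sc; intros t.
  exact (sum_cv_maj (coef a) (fun k t => coef a k * cos (freq b k * t + ps)) t (g t) Sc
           (g_sum t) coef_sum (fun k => Rabs_mul_cos_le _ _ (Rlt_le _ _ (coef_gt0 a k)))).
Qed.

Lemma cos_series_nowhere_derivable t : ~ exists l, derivable_pt_lim g t l.
Proof.
  intros [l g_deriv]; pose proof PI_RGT_0.
  set (eps := / (1024 * PI)).
  assert (eps_gt0 : 0 < eps) by (apply Rinv_0_lt_compat; lra).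
  destruct (g_deriv eps eps_gt0) as [delta g_delta].
  assert (residual : forall h, 0 < h < delta -> Rabs (g (t + h) - g t - l * h) <= eps * h).
  { intros h h_range.
    assert (Rabs h < delta) by (rewrite Rabs_right; lra).
    specialize (g_delta h ltac:(lra) ltac:(assumption)).
    replace (g (t + h) - g t - l * h) with (h * ((g (t + h) - g t) / h - l)) by (field; lra).
    rewrite Rabs_mult, Rabs_right, Rmult_comm by lra.
    apply Rmult_le_compat_r; lra. }
  destruct (residual_log_gap_le t l eps delta (cond_pos delta) (Rlt_le _ _ eps_gt0) residual)
    as [j0 log_gap].
  pose proof (Rpower_ln_jj_ge1 (b - a) (S j0) ltac:(lra) ltac:(lia)).
  specialize (log_gap (S j0) ltac:(lia)).
  assert (512 * PI * eps = /2) by (unfold eps; field; lra).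
  lra.
Qed.

Lemma cos_series_nowhere_lipschitz : a < b -> forall t, ~ lipschitz_at_R g t.
Proof.
  intros a_lt_b t [L [eta [L_gt0 [eta_gt0 lipschitz]]]].
  assert (residual : forall h, 0 < h < eta -> Rabs (g (t + h) - g t - 0 * h) <= L * h).
  { intros h h_range; rewrite Rmult_0_l, Rminus_0_r.
    replace (L * h) with (L * Rabs (t + h - t))
      by (replace (t + h - t) with h by ring; rewrite Rabs_right; lra).
    apply lipschitz; lra. }
  destruct (residual_log_gap_le t 0 L eta eta_gt0 (Rlt_le _ _ L_gt0) residual) as [j0 log_gap].
  destruct (Rpower_ln_jj_unbounded (b - a) (512 * PI * L) j0 ltac:(lra)) as [j [j_ge large]].
  specialize (log_gap j j_ge); lra.
Qed.

End F1_series.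

Lemma cos_terms_summable a b t ps (u : nat -> R) : 1 < a ->
  (forall k, u k = coef a k * cos (freq b k * t + ps)) ->
  (exists l, infinite_sum u l) /\
  infinite_sum (fun k => coef a k * cos (freq b k * t + ps)) (series_sum u).
Proof.
  intros a_gt1 u_eq; destruct (coef_summable a a_gt1) as [Sc coef_sum].
  assert (u_summable : exists l, infinite_sum u l).
  { apply (infinite_sum_of_Rabs_le _ (coef a) Sc); [|exact coef_sum].
    intros k; rewrite u_eq; apply Rabs_mul_cos_le, Rlt_le, coef_gt0. }
  split; [assumption|].
  apply (infinite_sum_ext u); [assumption | apply series_sum_spec; assumption].
Qed.

Lemma Cmod_le_Rabs_fst_snd z : Cmod z <= Rabs (fst z) + Rabs (snd z).
Proof.
  pose proof (Rabs_pos (fst z)); pose proof (Rabs_pos (snd z)).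
  unfold Cmod; rewrite <- (sqrt_pow2 (Rabs (fst z) + Rabs (snd z))) by lra.
  apply sqrt_le_1_alt; rewrite <- (pow2_abs (fst z)), <- (pow2_abs (snd z)); nra.
Qed.

Lemma Rabs_fst_le_Cmod z : Rabs (fst z) <= Cmod z.
Proof.
  unfold Cmod; rewrite <- (sqrt_pow2 (Rabs (fst z))) by apply Rabs_pos.
  apply sqrt_le_1_alt; rewrite pow2_abs; pose proof (pow2_ge_0 (snd z)); lra.
Qed.

Section Complex_valued.
Variable f : R -> R * R.

Lemma continuous_C_of_parts t :
  continuity (fun t => fst (f t)) -> continuity (fun t => snd (f t)) -> continuous_C f t.
Proof.
  intros fst_cont snd_cont eps eps_gt0.
  destruct (fst_cont t (eps/2) ltac:(lra)) as [d1 [d1_gt0 close1]].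
  destruct (snd_cont t (eps/2) ltac:(lra)) as [d2 [d2_gt0 close2]].
  exists (Rmin d1 d2); split; [apply Rmin_pos; assumption|]; intros s s_close.
  destruct (Req_dec s t) as [-> | s_neq].
  - unfold Cmod, Csub; cbn [fst snd]; rewrite !Rminus_diag.
    replace (0 ^ 2 + 0 ^ 2) with 0 by ring; rewrite sqrt_0; lra.
  - assert (Rabs (fst (f s) - fst (f t)) < eps/2).
    { apply (close1 s); split; [split; [exact I | congruence]|]; simpl; unfold R_dist.
      pose proof (Rmin_l d1 d2); lra. }
    assert (Rabs (snd (f s) - snd (f t)) < eps/2).
    { apply (close2 s); split; [split; [exact I | congruence]|]; simpl; unfold R_dist.
      pose proof (Rmin_r d1 d2); lra. }
    eapply Rle_lt_trans; [apply Cmod_le_Rabs_fst_snd | simpl; lra].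
Qed.

Lemma bounded_C_of_parts :
  bounded_R (fun t => fst (f t)) -> bounded_R (fun t => snd (f t)) -> bounded_C f.
Proof.
  intros [M1 fst_bound] [M2 snd_bound]; exists (M1 + M2); intros t.
  eapply Rle_trans; [apply Cmod_le_Rabs_fst_snd|].
  specialize (fst_bound t); specialize (snd_bound t); lra.
Qed.

Lemma not_differentiable_C_of_fst t :
  (~ exists l, derivable_pt_lim (fun t => fst (f t)) t l) -> ~ differentiable_C f t.
Proof.
  intros fst_not_deriv [l f_deriv]; apply fst_not_deriv; exists (fst l).
  intros eps eps_gt0; destruct (f_deriv eps eps_gt0) as [delta [delta_gt0 close]].
  exists (mkposreal delta delta_gt0); intros h h_neq0 h_small.
  eapply Rle_lt_trans; [|exact (close h h_neq0 h_small)].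
  exact (Rabs_fst_le_Cmod
           (Csub (fst (Csub (f (t + h)) (f t)) / h, snd (Csub (f (t + h)) (f t)) / h) l)).
Qed.

Lemma not_lipschitz_at_C_of_fst t :
  ~ lipschitz_at_R (fun t => fst (f t)) t -> ~ lipschitz_at_C f t.
Proof.
  intros fst_not_lip [L [eta [L_gt0 [eta_gt0 lipschitz]]]]; apply fst_not_lip.
  exists L, eta; repeat split; try assumption; intros s s_close.
  eapply Rle_trans; [apply (Rabs_fst_le_Cmod (Csub (f s) (f t))) | apply lipschitz; assumption].
Qed.

End Complex_valued.

Theorem mainTheorem11 (a b : R) (ha : 1 < a) (hab : a <= b) :
  (* the defining series converge for every t *)
  (forall t, (exists l, infinite_sum (re_term a b t) l) /\
             (exists l, infinite_sum (im_term a b t) l)) /\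
  (* continuity *)
  (forall t, continuous_C (F1 a b) t) /\
  continuity (ReF1 a b) /\ continuity (ImF1 a b) /\
  (* boundedness *)
  bounded_C (F1 a b) /\ bounded_R (ReF1 a b) /\ bounded_R (ImF1 a b) /\
  (* nowhere differentiable *)
  (forall t, ~ differentiable_C (F1 a b) t) /\
  (forall t, ~ exists l, derivable_pt_lim (ReF1 a b) t l) /\
  (forall t, ~ exists l, derivable_pt_lim (ImF1 a b) t l) /\
  (* nowhere Lipschitz when b > a *)
  (a < b ->
     forall t, ~ lipschitz_at_C (F1 a b) t /\
               ~ lipschitz_at_R (ReF1 a b) t /\
               ~ lipschitz_at_R (ImF1 a b) t).
Proof.
  pose proof (fun t => cos_terms_summable a b t 0 (re_term a b t) ha (re_term_eq a b t)) as Re.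
  pose proof (fun t => cos_terms_summable a b t (- (PI/2)) (im_term a b t) ha (im_term_eq a b t))
    as Im.
  assert (ReS : forall t, infinite_sum (fun k => coef a k * cos (freq b k * t + 0)) (ReF1 a b t))
    by (intros t; apply (Re t)).
  assert (ImS : forall t,
            infinite_sum (fun k => coef a k * cos (freq b k * t + - (PI/2))) (ImF1 a b t))
    by (intros t; apply (Im t)).
  pose proof (cos_series_continuous a b ha _ _ ReS) as Re_cont.
  pose proof (cos_series_continuous a b ha _ _ ImS) as Im_cont.
  pose proof (cos_series_bounded a b ha _ _ ReS) as Re_bounded.
  pose proof (cos_series_bounded a b ha _ _ ImS) as Im_bounded.
  pose proof (cos_series_nowhere_derivable a b ha hab _ _ ReS) as Re_nondiff.
  pose proof (cos_series_nowhere_derivable a b ha hab _ _ ImS) as Im_nondiff.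
  pose proof (cos_series_nowhere_lipschitz a b ha hab _ _ ReS) as Re_nonlip.
  pose proof (cos_series_nowhere_lipschitz a b ha hab _ _ ImS) as Im_nonlip.
  split; [intros t; split; [apply (Re t) | apply (Im t)]|].
  split; [intros t; apply continuous_C_of_parts; assumption|].
  do 2 (split; [assumption|]).
  split; [apply bounded_C_of_parts; assumption|].
  do 2 (split; [assumption|]).
  split; [intros t; apply not_differentiable_C_of_fst, Re_nondiff|].
  do 2 (split; [assumption|]).
  intros a_lt_b t; split; [apply not_lipschitz_at_C_of_fst|split]; auto.
Qed.
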